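(* For every integer $m\ge1$, as formal power series (or entire functions) in $z$, $$\sum_{n\ge0}\frac{(m+n-1)!}{(2m+n-1)!}\,\frac{z^n}{n!}=\frac{1}{z^{2m-1}}\sum_{k=0}^{m-1}(-1)^k\binom{m+k-1}{2k}2^k(2k-1)!!\,z^{m-1-k}\big(e^z+(-1)^{m+k}\big),$$ where $(2k-1)!!=1\cdot3\cdots(2k-1)$ and $(-1)!!=1$. *)

From Stdlib Require Import Reals Arith Factorial Binomial.
Open Scope R_scope.

(* odd double factorial: dfact_odd k = (2k-1)!! = 1*3*...*(2k-1), dfact_odd 0 = (-1)!! = 1 *)
Fixpoint dfact_odd (k : nat) : nat :=
  match k with
  | O => 1%nat
  | S k' => ((2 * k' + 1) * dfact_odd k')%nat
  end.

Definition lhs_term (m : nat) (z : R) (n : nat) : R :=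
  INR (fact (m + n - 1)) / INR (fact (2 * m + n - 1)) * (z ^ n / INR (fact n)).

Definition rhs (m : nat) (z : R) : R :=
  / z ^ (2 * m - 1) *
  sum_f_R0 (fun k => (-1) ^ k * C (m + k - 1) (2 * k) * 2 ^ k * INR (dfact_odd k)
                     * z ^ (m - 1 - k) * (exp z + (-1) ^ (m + k))) (m - 1).

From Stdlib Require Import Reals Factorial Lra Lia.
From Coquelicot Require Import Coquelicot.
Open Scope R_scope.

(* With m = j + 1, the left-hand side is the entire function
   g_j(z) = sum_n (j+n)! / ((2j+n+1)! n!) z^n, and shifting the index of summation
   gives z g_(j+1) = 2 g_j' - g_j.  The functions P_q(z) = e^z / z^q + 1 / (-z)^q
   satisfy (2 P_q' - P_q) / z = P_(q+1) - 2q P_(q+2), so with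
   a_(j,k) = (-1)^k (j+k)! / (k! (j-k)!) the sums F_j = sum_(k<=j) a_(j,k) P_(j+1+k)
   obey the same recurrence on z <> 0.  As g_0 = (e^z - 1) / z = F_0, induction on j
   (differentiating g_j = F_j on the punctured line) gives g_j = F_j, and F_j is the
   right-hand side because (2k)! = 2^k k! (2k-1)!!. *)

Ltac push_INR :=
  repeat first [rewrite S_INR | rewrite plus_INR | rewrite mult_INR | rewrite INR_0].
Ltac INR_neq_0 := solve [apply INR_fact_neq_0 | apply not_0_INR; lia].

Definition lhs_coef (j n : nat) : R :=
  INR (fact (j + n)) / INR (fact (2 * j + n + 1)) / INR (fact n).

Lemma lhs_coef_pos j n : 0 < lhs_coef j n.
Proof.
  unfold lhs_coef.
  repeat apply Rdiv_lt_0_compat; apply INR_fact_lt_0.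
Qed.

Lemma lhs_coef_succ j n :
  lhs_coef j (S n) = lhs_coef j n * (INR (S (j + n)) / (INR (2 * j + n + 2) * INR (S n))).
Proof.
  unfold lhs_coef.
  rewrite <- plus_n_Sm; replace (2 * j + S n + 1)%nat with (S (2 * j + n + 1)) by lia.
  rewrite !fact_simpl, !mult_INR.
  replace (S (2 * j + n + 1)) with (2 * j + n + 2)%nat by lia.
  field; repeat split; INR_neq_0.
Qed.

Lemma lhs_coef_ratio_bound j n : 0 <= lhs_coef j (S n) / lhs_coef j n <= / INR (S n).
Proof.
  pose proof (lhs_coef_pos j n).
  rewrite lhs_coef_succ.
  assert (Hnum : 0 <= INR (S (j + n)) <= INR (2 * j + n + 2))
    by (split; [apply pos_INR | apply le_INR; lia]).
  assert (Hden : 0 < INR (2 * j + n + 2) /\ 0 < INR (S n)) by (split; apply lt_0_INR; lia).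
  replace (_ / lhs_coef j n) with (INR (S (j + n)) / INR (2 * j + n + 2) * / INR (S n))
    by (field; repeat split; try lra; INR_neq_0).
  split.
  - apply Rmult_le_pos; [apply Rdiv_le_0_compat; lra | apply Rlt_le, Rinv_0_lt_compat; lra].
  - rewrite <- (Rmult_1_l (/ INR (S n))) at 2.
    apply Rmult_le_compat_r; [apply Rlt_le, Rinv_0_lt_compat; lra|].
    rewrite <- (Rdiv_diag (INR (2 * j + n + 2))) by lra.
    apply Rmult_le_compat_r; [apply Rlt_le, Rinv_0_lt_compat|]; lra.
Qed.

Lemma CV_radius_lhs_coef j : CV_radius (lhs_coef j) = p_infty.
Proof.
  apply CV_radius_infinite_DAlembert; [intro n; apply Rgt_not_eq, lhs_coef_pos|].
  apply is_lim_seq_le_le with (u := fun _ => 0) (w := fun n => / INR (S n)).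
  - intro n. rewrite Rabs_pos_eq; apply lhs_coef_ratio_bound.
  - apply is_lim_seq_const.
  - apply (is_lim_seq_incr_1 (fun n => / INR n)).
    apply (is_lim_seq_inv _ p_infty); [apply is_lim_seq_INR | discriminate].
Qed.

Lemma lhs_coef_succ_l j n :
  lhs_coef (S j) n = lhs_coef j (S n) * (INR (S n) / INR (2 * j + n + 3)).
Proof.
  unfold lhs_coef.
  rewrite Nat.add_succ_comm.
  replace (2 * S j + n + 1)%nat with (S (2 * j + S n + 1)) by lia.
  rewrite (fact_simpl (2 * j + S n + 1)), (fact_simpl n), !mult_INR.
  replace (S (2 * j + S n + 1)) with (2 * j + n + 3)%nat by lia.
  field; repeat split; INR_neq_0.
Qed.

Lemma lhs_coef_rec_0 j : 2 * PS_derive (lhs_coef j) 0 - lhs_coef j 0 = 0.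
Proof.
  unfold PS_derive.
  rewrite lhs_coef_succ; push_INR.
  pose proof (pos_INR j).
  field; lra.
Qed.

Lemma lhs_coef_rec j n :
  lhs_coef (S j) n = 2 * PS_derive (lhs_coef j) (S n) - lhs_coef j (S n).
Proof.
  unfold PS_derive.
  rewrite lhs_coef_succ_l, (lhs_coef_succ j (S n)).
  push_INR.
  pose proof (pos_INR j); pose proof (pos_INR n).
  field; lra.
Qed.

Lemma lhs_coef_inside j z : Rbar_lt (Rabs z) (CV_radius (lhs_coef j)).
Proof. rewrite CV_radius_lhs_coef; exact I. Qed.

Definition lhs_fun (j : nat) (z : R) : R := PSeries (lhs_coef j) z.

Lemma lhs_fun_rec j z :
  z * lhs_fun (S j) z = 2 * PSeries (PS_derive (lhs_coef j)) z - lhs_fun j z.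
Proof.
  pose proof (lhs_coef_inside j z) as Hz.
  unfold lhs_fun.
  rewrite <- PSeries_incr_1, <- PSeries_scal, <- PSeries_minus.
  - apply PSeries_ext; intros [|n]; [symmetry; apply lhs_coef_rec_0 | apply lhs_coef_rec].
  - apply ex_pseries_scal; [apply Rmult_comm | apply ex_pseries_derive, Hz].
  - apply CV_radius_inside, Hz.
Qed.

Definition pole_term (q : nat) (z : R) : R := exp z / z ^ q + / (- z) ^ q.

Definition pole_term_derive (q : nat) (z : R) : R :=
  exp z / z ^ q - INR q * exp z / z ^ S q + INR q / (- z) ^ S q.

Lemma is_derive_pole_term q z : z <> 0 -> is_derive (pole_term q) z (pole_term_derive q z).
Proof.
  intro hz; assert (hz' : - z <> 0) by lra.
  unfold pole_term; auto_derive.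
  - repeat split; auto using pow_nonzero.
  - unfold pole_term_derive; destruct q as [|q]; simpl.
    + field; auto.
    + pose proof (pow_nonzero z q hz); pose proof (pow_nonzero (- z) q hz').
      field; auto.
Qed.

Lemma pole_term_rec q z : z <> 0 ->
  (2 * pole_term_derive q z - pole_term q z) / z
  = pole_term (S q) z - 2 * INR q * pole_term (S (S q)) z.
Proof.
  intro hz; assert (hz' : - z <> 0) by lra.
  unfold pole_term, pole_term_derive; simpl.
  pose proof (pow_nonzero z q hz); pose proof (pow_nonzero (- z) q hz').
  field; auto.
Qed.

(* Extended by 0 beyond k = j, so that the index shift in [closed_form_rec] has no
   boundary case. *)
Definition closed_coef (j k : nat) : R :=
  if (k <=? j)%nat
  then (-1) ^ k * INR (fact (j + k)) / (INR (fact k) * INR (fact (j - k)))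
  else 0.

Lemma closed_coef_succ_0 j : closed_coef (S j) 0 = closed_coef j 0.
Proof.
  unfold closed_coef; simpl Nat.leb; cbv iota.
  rewrite !Nat.add_0_r, !Nat.sub_0_r.
  field; repeat split; apply INR_fact_neq_0.
Qed.

Lemma closed_coef_succ j k : (k <= j)%nat ->
  closed_coef (S j) (S k) = closed_coef j (S k) - 2 * INR (S (j + k)) * closed_coef j k.
Proof.
  intro hk; unfold closed_coef.
  rewrite (proj2 (Nat.leb_le (S k) (S j))), (proj2 (Nat.leb_le k j)) by lia.
  replace (S j - S k)%nat with (j - k)%nat by lia.
  replace (S j + S k)%nat with (S (S (j + k))) by lia.
  rewrite <- plus_n_Sm, !fact_simpl; simpl pow.
  pose proof (INR_fact_neq_0 (j + k)); pose proof (INR_fact_neq_0 k).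
  destruct (Nat.leb_spec (S k) j) as [hlt | hge].
  - replace (j - k)%nat with (S (j - S k)) by lia.
    rewrite fact_simpl; push_INR; rewrite minus_INR by lia; push_INR.
    pose proof (INR_fact_neq_0 (j - S k)); pose proof (pos_INR j); pose proof (pos_INR k).
    assert (INR j - INR k <> 0) by (apply Rminus_eq_contra, not_INR; lia).
    field; repeat split; lra.
  - replace j with k by lia; rewrite Nat.sub_diag; simpl (fact 0).
    pose proof (pos_INR k).
    push_INR; field; repeat split; lra.
Qed.

Definition closed_form (j : nat) (z : R) : R :=
  sum_f_R0 (fun k => closed_coef j k * pole_term (S (j + k)) z) j.

Definition closed_form_derive (j : nat) (z : R) : R :=
  sum_f_R0 (fun k => closed_coef j k * pole_term_derive (S (j + k)) z) j.

Lemma is_derive_closed_form j z :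
  z <> 0 -> is_derive (closed_form j) z (closed_form_derive j z).
Proof.
  intro hz; unfold closed_form, closed_form_derive.
  apply (is_derive_ext
           (fun x => sum_n (fun k => closed_coef j k * pole_term (S (j + k)) x) j)).
  { intro x; apply sum_n_Reals. }
  rewrite <- (sum_n_Reals (fun k => closed_coef j k * pole_term_derive (S (j + k)) z)).
  apply (is_derive_sum_n (fun k x => closed_coef j k * pole_term (S (j + k)) x)); intros k _.
  apply is_derive_scal, is_derive_pole_term, hz.
Qed.

Lemma sum_f_R0_shift (f : nat -> R) n :
  f (S n) = 0 -> sum_f_R0 f n = f 0%nat + sum_f_R0 (fun k => f (S k)) n.
Proof.
  intro hf.
  rewrite <- (Rplus_0_r (sum_f_R0 f n)), <- hf, <- tech5.
  apply decomp_sum; lia.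
Qed.

Lemma sum_f_R0_lin_comb (a x y : nat -> R) n c :
  (2 * sum_f_R0 (fun k => a k * x k) n - sum_f_R0 (fun k => a k * y k) n) / c
  = sum_f_R0 (fun k => a k * ((2 * x k - y k) / c)) n.
Proof. induction n as [|n IH]; simpl; [|rewrite <- IH]; unfold Rdiv; ring. Qed.

Lemma closed_form_rec j z : z <> 0 ->
  (2 * closed_form_derive j z - closed_form j z) / z = closed_form (S j) z.
Proof.
  intro hz; unfold closed_form, closed_form_derive.
  rewrite sum_f_R0_lin_comb.
  rewrite (sum_eq _ (fun k => closed_coef j k * pole_term (S (S (j + k))) z
                            - 2 * INR (S (j + k)) * closed_coef j k * pole_term (S (S (S (j + k)))) z)).
  2: { intros k _; rewrite pole_term_rec by exact hz; ring. }
  rewrite minus_sum, sum_f_R0_shift.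
  2: { unfold closed_coef; rewrite (proj2 (Nat.leb_gt (S j) j)) by lia; ring. }
  rewrite (decomp_sum _ (S j)) by lia; simpl pred.
  rewrite closed_coef_succ_0, !Nat.add_0_r.
  rewrite (sum_eq (fun k => closed_coef (S j) (S k) * pole_term (S (S j + S k)) z)
             (fun k => closed_coef j (S k) * pole_term (S (S (S (j + k)))) z
                       - 2 * INR (S (j + k)) * closed_coef j k * pole_term (S (S (S (j + k)))) z)).
  2: { intros k hk; rewrite closed_coef_succ by exact hk.
       replace (S j + S k)%nat with (S (S (j + k))) by lia; ring. }
  rewrite minus_sum.
  rewrite (sum_eq (fun k => closed_coef j (S k) * pole_term (S (S (j + S k))) z)
             (fun k => closed_coef j (S k) * pole_term (S (S (S (j + k)))) z))
    by (intros k _; rewrite <- plus_n_Sm; reflexivity).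
  ring.
Qed.

Lemma exp_eq_lhs_fun_0 z : exp z = 1 + z * lhs_fun 0 z.
Proof.
  assert (Hex : ex_pseries (fun n => / INR (fact n)) z) by (eexists; apply is_exp_Reals).
  rewrite exp_Reals, PSeries_decr_1 by exact Hex; simpl; rewrite Rinv_1.
  do 2 f_equal; apply PSeries_ext; intro n.
  unfold PS_decr_1, lhs_coef.
  replace (2 * 0 + n + 1)%nat with (S n) by lia.
  rewrite Nat.add_0_l, fact_simpl, mult_INR.
  field; split; INR_neq_0.
Qed.

Lemma lhs_fun_closed_form j z : z <> 0 -> lhs_fun j z = closed_form j z.
Proof.
  revert z; induction j as [|j IH]; intros z hz.
  - unfold closed_form, closed_coef, pole_term; simpl.
    rewrite exp_eq_lhs_fun_0; field; exact hz.
  - assert (Hder : is_derive (lhs_fun j) z (closed_form_derive j z)).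
    { apply (is_derive_ext_loc (closed_form j)); [|apply is_derive_closed_form, hz].
      apply (filter_imp (fun t => t <> 0)); [intros t ht; symmetry; apply IH, ht|].
      apply open_neq, hz. }
    assert (Hderiv : PSeries (PS_derive (lhs_coef j)) z = closed_form_derive j z).
    { rewrite <- (is_derive_unique _ _ _ (is_derive_PSeries _ _ (lhs_coef_inside j z))).
      exact (is_derive_unique _ _ _ Hder). }
    rewrite <- closed_form_rec, <- Hderiv, <- IH, <- lhs_fun_rec by exact hz.
    field; exact hz.
Qed.

Lemma fact_double i : INR (fact (2 * i)) = 2 ^ i * INR (fact i) * INR (dfact_odd i).
Proof.
  induction i as [|i IH]; [simpl; ring|].
  replace (2 * S i)%nat with (S (S (2 * i))) by lia.
  rewrite !fact_simpl, !mult_INR, IH; simpl dfact_odd.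
  push_INR; simpl; ring.
Qed.

Lemma dfact_odd_neq_0 i : INR (dfact_odd i) <> 0.
Proof.
  apply not_0_INR; induction i as [|i IH]; simpl; [lia|].
  apply Nat.neq_mul_0; split; [lia | exact IH].
Qed.

Lemma C_double_dfact_odd j i : (i <= j)%nat ->
  Binomial.C (j + i) (2 * i)
  = INR (fact (j + i)) / (INR (fact i) * INR (fact (j - i)) * (2 ^ i * INR (dfact_odd i))).
Proof.
  intro hi; unfold Binomial.C.
  replace (j + i - 2 * i)%nat with (j - i)%nat by lia.
  rewrite fact_double.
  pose proof (pow_nonzero 2 i ltac:(lra)); pose proof (dfact_odd_neq_0 i).
  field; repeat split; auto using INR_fact_neq_0.
Qed.

Lemma pole_term_eq q z : z <> 0 -> pole_term q z = (exp z + (-1) ^ q) / z ^ q.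
Proof.
  intro hz; unfold pole_term.
  replace (- z) with (-1 * z) by ring; rewrite Rpow_mult_distr.
  assert (Hsq : (-1) ^ q * (-1) ^ q = 1)
    by (rewrite <- Rpow_mult_distr, <- (pow1 q); f_equal; ring).
  assert (Hsign : (-1) ^ q <> 0) by (intro h; rewrite h in Hsq; lra).
  assert (Hinv : / (-1) ^ q = (-1) ^ q)
    by (rewrite <- (Rmult_1_l (/ _)), <- Hsq; field; exact Hsign).
  rewrite Rinv_mult, Hinv; field; apply pow_nonzero, hz.
Qed.

Lemma rhs_closed_form j z : z <> 0 -> rhs (S j) z = closed_form j z.
Proof.
  intro hz; unfold rhs, closed_form.
  replace (S j - 1)%nat with j by lia.
  rewrite scal_sum; apply sum_eq; intros i hi.
  unfold closed_coef; rewrite (proj2 (Nat.leb_le i j) hi), pole_term_eq by exact hz.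
  replace (S j + i - 1)%nat with (j + i)%nat by lia.
  rewrite C_double_dfact_odd by exact hi.
  replace (S j - 1 - i)%nat with (j - i)%nat by lia.
  replace (S j + i)%nat with (S (j + i)) by lia.
  replace (2 * S j - 1)%nat with (j - i + S (j + i))%nat by lia.
  rewrite pow_add.
  pose proof (pow_nonzero 2 i ltac:(lra)); pose proof (dfact_odd_neq_0 i).
  pose proof (pow_nonzero z (j - i) hz); pose proof (pow_nonzero z (S (j + i)) hz).
  field; repeat split; auto using INR_fact_neq_0.
Qed.

Lemma lhs_term_succ j z n : lhs_term (S j) z n = lhs_coef j n * z ^ n.
Proof.
  unfold lhs_term, lhs_coef.
  replace (S j + n - 1)%nat with (j + n)%nat by lia.
  replace (2 * S j + n - 1)%nat with (2 * j + n + 1)%nat by lia.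
  field; split; apply INR_fact_neq_0.
Qed.

Theorem mainTheorem17 (m : nat) (hm : (1 <= m)%nat) (z : R) (hz : z <> 0) :
  infinite_sum (lhs_term m z) (rhs m z).
Proof.
  destruct m as [|j]; [lia|].
  rewrite rhs_closed_form, <- lhs_fun_closed_form by exact hz.
  apply is_series_Reals.
  apply (is_series_ext (fun n => scal (z ^ n) (lhs_coef j n))).
  - intro n; rewrite lhs_term_succ; apply Rmult_comm.
  - exact (PSeries_correct _ _ (CV_radius_inside _ _ (lhs_coef_inside j z))).
Qed.
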